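(* Let $\mathbb{X}$ be a smooth Banach space and $\mathbb{Y}$ an $n$-dimensional subspace of $\mathbb{X}$. Then $\mathbb{Y}$ is coproximinal if and only if $\dim\operatorname{span}\{y^*\in S_{\mathbb{X}^*}: y^*\in J(y),\ y\in\mathbb{Y}\}=n$.
   Context: For $y\neq 0$, $J(y)=\{f\in\mathbb{X}^*:\|f\|=1,f(y)=\|y\|\}$; $\mathbb{X}$ is smooth if $J(y)$ is a singleton for every unit vector $y$. $S_{\mathbb{X}^*}$ is the unit sphere of $\mathbb{X}^*$. Given $x\in\mathbb{X}$, $y_0\in\mathbb{Y}$ is a best coapproximation to $x$ out of $\mathbb{Y}$ if $\|y_0-y\|\le\|x-y\|$ for all $y\in\mathbb{Y}$; $\mathbb{Y}$ is coproximinal if every $x\in\mathbb{X}$ has a best coapproximation out of $\mathbb{Y}$. *)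

From HB Require Import structures.
From mathcomp Require Import all_boot all_order all_algebra.
From mathcomp Require Import all_classical all_reals all_analysis.
Set Implicit Arguments. Unset Strict Implicit. Unset Printing Implicit Defensive.
Import Order.TTheory GRing.Theory Num.Theory.
Import numFieldNormedType.Exports.
Local Open Scope classical_set_scope.
Local Open Scope ring_scope.

Section Defs.
Variables (R : realType) (X : normedModType R).

Definition lin_subspace (Y : set X) : Prop :=
  Y 0 /\ forall (a : R) (x y : X), Y x -> Y y -> Y (a *: x + y).

Definition vspan (S : set X) : set X :=
  [set v | exists (k : nat) (c : 'I_k -> R) (s : 'I_k -> X),
      (forall i, S (s i)) /\ v = \sum_(i < k) c i *: s i].

Definition vlin_indep (n : nat) (b : 'I_n -> X) : Prop :=
  forall c : 'I_n -> R, \sum_(i < n) c i *: b i = 0 -> forall i, c i = 0.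

Definition vdim_span (S : set X) (n : nat) : Prop :=
  exists b : 'I_n -> X, vlin_indep b /\ vspan S = vspan (range b).

Definition is_dual (f : X -> R) : Prop :=
  (forall (a : R) (x y : X), f (a *: x + y) = a * f x + f y) /\ continuous f.

Definition dnorm (f : X -> R) : R :=
  sup [set `|f x| | x in [set x : X | `|x| <= 1]].

Definition dual_sphere : set (X -> R) := [set f | is_dual f /\ dnorm f = 1].

Definition J (y : X) : set (X -> R) :=
  [set f | dual_sphere f /\ f y = `|y|].

Definition smooth : Prop :=
  forall y : X, `|y| = 1 -> exists f, J y = [set f].

Definition fspan (S : set (X -> R)) : set (X -> R) :=
  [set g | exists (k : nat) (c : 'I_k -> R) (s : 'I_k -> (X -> R)),
      (forall i, S (s i)) /\ g = (fun x => \sum_(i < k) c i * s i x)].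

Definition flin_indep (n : nat) (b : 'I_n -> (X -> R)) : Prop :=
  forall c : 'I_n -> R, (fun x => \sum_(i < n) c i * b i x) = (fun _ => 0) ->
    forall i, c i = 0.

Definition fdim_span (S : set (X -> R)) (n : nat) : Prop :=
  exists b : 'I_n -> (X -> R), flin_indep b /\ fspan S = fspan (range b).

Definition best_coapprox (Y : set X) (x y0 : X) : Prop :=
  Y y0 /\ forall y, Y y -> `|y0 - y| <= `|x - y|.

Definition coproximinal (Y : set X) : Prop :=
  forall x : X, exists y0, best_coapprox Y x y0.

(* { y^* in S_{X^*} : y^* in J(y), y in Y }  (J is defined for y <> 0) *)
Definition J_set (Y : set X) : set (X -> R) :=
  [set f | dual_sphere f /\ exists y, Y y /\ y <> 0 /\ J y f].

End Defs.

From HB Require Import structures.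
From mathcomp Require Import all_boot all_order all_algebra.
From mathcomp Require Import all_classical all_reals all_analysis.
From mathcomp Require Import lra.
Import Order.TTheory GRing.Theory Num.Theory.
Import numFieldNormedType.Exports.
Local Open Scope classical_set_scope.
Local Open Scope ring_scope.
Set Implicit Arguments. Unset Strict Implicit. Unset Printing Implicit Defensive.

(* Smoothness gives each u <> 0 a unique support functional f_u.  The key fact
   is that f_u annihilates every w Birkhoff-James orthogonal to u: support
   functionals at u + w/(k+1) are nonnegative at w, and a pointwise cluster
   point of them is again a support functional at u, hence f_u.
   If y0 is a best coapproximation to x, then x - y0 is orthogonal (in this
   sense) to all of Y, so every functional of J_set Y takes the same value at
   x and at a point of Y; hence each of them is determined by its values on a
   basis e of Y, and the span has dimension n (at least n, because J_set Y
   separates the points of Y).  Conversely, if the span has a basis b of n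
   functionals, the map y |-> (b_i y)_i is injective on Y, hence onto R^n, and
   the y0 in Y with b_i y0 = b_i x is a best coapproximation, since
   |y0 - y| = f (y0 - y) = f (x - y) <= |x - y| for f in J (y0 - y). *)

Section LinearSystems.
Variable F : fieldType.

Lemma left_kernel_nonzero m n (A : 'M[F]_(m, n)) : (\rank A < m)%N ->
  exists2 u : 'rV_m, u != 0 & u *m A = 0.
Proof.
move=> rA; have kerA : kermx A != 0 by rewrite -mxrank_eq0 mxrank_ker -lt0n subn_gt0.
have [i rowi] : exists i, row i (kermx A) != 0.
  apply/existsP; apply: contraR kerA; rewrite negb_exists => /forallP rows0.
  by apply/eqP/row_matrixP => i; rewrite row0; apply/eqP/negPn.
by exists (row i (kermx A)) => //; apply/sub_kermxP; exact: row_sub.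
Qed.

Lemma homogeneous_system_nontrivial k n (a : 'I_k -> 'I_n -> F) : (k < n)%N ->
  exists2 c : 'I_n -> F, (exists j, c j != 0) & forall i, \sum_j a i j * c j = 0.
Proof.
move=> kn; pose A := \matrix_(i, j) a i j.
have [|u u0 uA] := @left_kernel_nonzero _ _ A^T.
  exact: leq_ltn_trans (rank_leq_col _) kn.
exists (fun j => u 0 j).
  apply/existsP; apply: contraR u0; rewrite negb_exists => /forallP u0.
  by apply/eqP/matrixP => i j; rewrite mxE (ord1 i); apply/eqP/negPn.
move=> i; transitivity ((u *m A^T) 0 i); last by rewrite uA mxE.
by rewrite mxE; apply: eq_bigr => j _; rewrite !mxE mulrC.
Qed.

Lemma square_system_solvable n (a : 'I_n -> 'I_n -> F) :
  (forall c, (forall j, \sum_i c i * a i j = 0) -> forall i, c i = 0) ->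
  forall v, exists c, forall j, \sum_i c i * a i j = v j.
Proof.
move=> a_free v; pose A := \matrix_(i, j) a i j.
have mulA (u : 'rV_n) j : (u *m A) 0 j = \sum_i u 0 i * a i j.
  by rewrite mxE; apply: eq_bigr => i _; rewrite mxE.
have : row_free A.
  apply: contraT; rewrite /row_free => rA.
  have [|u u0 uA] := left_kernel_nonzero (A := A); first by rewrite ltn_neqAle rA rank_leq_row.
  case/negP: u0; apply/eqP/matrixP => i j; rewrite mxE (ord1 i).
  by apply: (a_free (fun i => u 0 i)) => l; rewrite -mulA uA mxE.
rewrite row_free_unit => Aunit; pose w := \row_j v j.
exists (fun i => (w *m invmx A) 0 i) => j.
by rewrite -mulA mulmxKV // mxE.
Qed.

End LinearSystems.

Section SupportFunctionals.
Variables (R : realType) (X : normedModType R).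
Implicit Types (f g : X -> R) (u w x y : X).

Definition linear_form f := forall (a : R) x y, f (a *: x + y) = a * f x + f y.

Definition contraction f := forall x, `|f x| <= `|x|.

Lemma linear_form0 f : linear_form f -> f 0 = 0.
Proof.
move=> lf; have := lf 1 0 0; rewrite scale1r addr0 mul1r.
by rewrite -{1}(addr0 (f 0)) => /addrI.
Qed.

Lemma linear_formZ f a x : linear_form f -> f (a *: x) = a * f x.
Proof. by move=> lf; have := lf a x 0; rewrite addr0 linear_form0 // addr0. Qed.

Lemma linear_formD f x y : linear_form f -> f (x + y) = f x + f y.
Proof. by move=> lf; have := lf 1 x y; rewrite scale1r mul1r. Qed.

Lemma linear_formB f x y : linear_form f -> f (x - y) = f x - f y.
Proof. by move=> lf; rewrite linear_formD // -scaleN1r linear_formZ // mulN1r. Qed.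

Lemma linear_form_sum f k (c : 'I_k -> R) (s : 'I_k -> X) : linear_form f ->
  f (\sum_(i < k) c i *: s i) = \sum_(i < k) c i * f (s i).
Proof.
move=> lf; elim: k c s => [|k IH] c s; first by rewrite !big_ord0 linear_form0.
by rewrite !big_ord_recr /= linear_formD // linear_formZ // IH.
Qed.

Lemma linear_form_comb k (c : 'I_k -> R) (s : 'I_k -> X -> R) :
  (forall i, linear_form (s i)) -> linear_form (fun x => \sum_(i < k) c i * s i x).
Proof.
move=> ls a x y; rewrite mulr_sumr -big_split; apply: eq_bigr => i _.
by rewrite ls mulrDr mulrCA.
Qed.

Lemma dual_sphere_contraction f : dual_sphere f -> contraction f.
Proof.
move=> [[lf _] f1] x.
set S := [set `|f x| | x in [set x : X | `|x| <= 1]].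
have supS : has_sup S.
  apply: contrapT => /sup_out; rewrite /dnorm in f1; rewrite -/S f1 => /eqP.
  by rewrite oner_eq0.
have [->|x0] := eqVneq x 0; first by rewrite linear_form0 // normr0.
have nx : 0 < `|x| by rewrite normr_gt0.
have Sx : S (`|f (`|x|^-1 *: x)|) by exists (`|x|^-1 *: x); rewrite //= normfZV.
have := sup_upper_bound supS Sx.
rewrite /dnorm -/S in f1; rewrite f1 linear_formZ // normrM normfV normr_id.
by rewrite mulrC -ler_pdivlMr ?invr_gt0 // invrK mul1r.
Qed.

Lemma J_of_contraction u g : linear_form g -> contraction g -> u != 0 ->
  g u = `|u| -> J u g.
Proof.
move=> lg cg u0 gu; split=> //; split; first split=> //.
  move=> x; apply/cvgrPdist_lt => e e0; near=> y.
  by rewrite -linear_formB //; apply: le_lt_trans (cg _) _; near: y; exact: cvgr_dist_lt.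
set S := [set `|g x| | x in [set x : X | `|x| <= 1]].
have S1 : ubound S 1 by move=> _ [x /= x1 <-]; apply: le_trans (cg x) x1.
apply/le_anti/andP; split.
  by apply: ge_sup S1; exists `|g 0|; exists 0 => //=; rewrite normr0.
apply: (sup_upper_bound (_ : has_sup S)).
  by split; [exists `|g 0|; exists 0 => //=; rewrite normr0|exists 1].
exists (`|u|^-1 *: u); first by rewrite /= normfZV.
by rewrite linear_formZ // gu mulVf ?normr_eq0 // normr1.
Unshelve. all: by end_near.
Qed.

Lemma J_normalize y f : y != 0 -> J y f -> J (`|y|^-1 *: y) f.
Proof.
move=> y0 [[[lf cf] f1] fy]; split=> //.
by rewrite normfZV // linear_formZ // fy mulVf ?normr_eq0.
Qed.

Lemma smooth_J_exists y : smooth X -> y != 0 -> exists f, J y f.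
Proof.
move=> sX y0; have [f Jf] := sX _ (normfZV y0).
have : J (`|y|^-1 *: y) f by rewrite Jf.
move=> [fS]; have [[lf _] _] := fS; rewrite normfZV // linear_formZ // => fy.
exists f; split=> //; apply: (mulfI (_ : `|y|^-1 != 0)); last by rewrite mulVf ?normr_eq0.
by rewrite invr_eq0 normr_eq0.
Qed.

Lemma smooth_J_uniq y f g : smooth X -> y != 0 -> J y f -> J y g -> f = g.
Proof.
move=> sX y0 /(J_normalize y0) Jf /(J_normalize y0) Jg.
by have [h Jh] := sX _ (normfZV y0); move: Jf Jg; rewrite Jh => -> ->.
Qed.

Lemma ultra_fmap (U : set_system nat) (h : nat -> R) :
  UltraFilter U -> UltraFilter (h @ U).
Proof.
move=> UU; split; first exact: fmap_proper_filter.
move=> G PG sG; rewrite predeqE => B; split; last exact: sG.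
move=> GB; have [//|UBc] := in_ultra_setVsetC (h @^-1` B) UU.
have : G (B `&` ~` B) by apply: filterI => //; exact: sG.
by rewrite setICr => /filter_ex [].
Qed.

(* The values at each x lie in the compact [-|x|, |x|], so they converge along
   a common ultrafilter refining the Frechet filter. *)
Lemma linear_contraction_cluster (fs : nat -> X -> R) :
  (forall k, linear_form (fs k)) -> (forall k, contraction (fs k)) ->
  exists g, [/\ linear_form g, contraction g &
    forall x (P : set R), closed P -> (\forall k \near \oo, P (fs k x)) -> P (g x)].
Proof.
move=> lfs cfs.
have [U [UU ooU]] := @ultraFilterLemma nat (\oo : set_system nat) _.
have lim_ex x : exists p, `[- `|x|, `|x|]%classic p /\ (fun k => fs k x) @ U --> p.
  have := @segment_compact R (- `|x|) `|x|.
  rewrite compact_ultra => /(_ _ (ultra_fmap (fun k => fs k x) UU)); case.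
    apply: ooU; apply: filterE => k /=.
    by rewrite in_itv /= -ler_norml; exact: cfs.
  by move=> p [Ip fsp]; exists p.
have [g lim_g] := choice lim_ex.
exists g; split.
- move=> a x y.
  have fsxy : (fun k => fs k (a *: x + y)) = (fun k => a * fs k x + fs k y).
    by apply/funext => k; rewrite lfs.
  have := (lim_g (a *: x + y)).2; rewrite fsxy => lim1.
  have lim2 : (fun k => a * fs k x + fs k y) @ U --> a * g x + g y.
    by apply: cvgD; [apply: cvgMl_tmp; exact: (lim_g x).2|exact: (lim_g y).2].
  exact: (cvg_unique (@norm_hausdorff _ _) lim1 lim2).
- by move=> x; have := (lim_g x).1; rewrite /= in_itv /= -ler_norml.
- by move=> x P cP evP; exact: (closed_cvg P cP (ooU _ evP) (g x) (lim_g x).2).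
Qed.

Lemma J_perturb u w t g : (forall s : R, `|u| <= `|u + s *: w|) -> 0 < t ->
  J (u + t *: w) g -> 0 <= g w /\ `|u| - t * `|w| <= g u.
Proof.
move=> uw t0 [gS]; have [[lg _] _] := gS; have cg := dual_sphere_contraction gS.
rewrite linear_formD // linear_formZ // => gv.
have gu : g u <= `|u| by apply: le_trans (ler_norm _) (cg u).
have gw : g w <= `|w| by apply: le_trans (ler_norm _) (cg w).
have := uw t; rewrite -gv => ugv.
have tgw : 0 <= t * g w by lra.
split; first by rewrite -(pmulr_rge0 _ t0).
by have := ler_wpM2l (ltW t0) gw; lra.
Qed.

(* The support functional at u is a cluster point of support functionals at
   u + w/(k+1), which are all nonnegative at w. *)
Lemma smooth_J_birkhoff_ge0 u w f : smooth X -> u != 0 ->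
  (forall s : R, `|u| <= `|u + s *: w|) -> J u f -> 0 <= f w.
Proof.
move=> sX u0 uw Jf.
pose t k : R := k.+1%:R^-1.
have t0 k : 0 < t k by rewrite invr_gt0 ltr0Sn.
have v0 k : u + t k *: w != 0.
  by rewrite -normr_gt0; apply: lt_le_trans (uw _); rewrite normr_gt0.
have /choice [fs Jfs] k : exists g, J (u + t k *: w) g := smooth_J_exists sX (v0 k).
have perturb k := J_perturb uw (t0 k) (Jfs k).
have [g [lg cg g_cluster]] : exists g, [/\ linear_form g, contraction g &
    forall x (P : set R), closed P -> (\forall k \near \oo, P (fs k x)) -> P (g x)].
  apply: linear_contraction_cluster => k; first by have [[[]]] := Jfs k.
  by have [gS _] := Jfs k; exact: dual_sphere_contraction.
have gu : g u = `|u|.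
  apply/le_anti/andP; split; first by apply: le_trans (ler_norm _) (cg u).
  apply/ler_addgt0Pr => e e0; rewrite -lerBlDr.
  apply: (g_cluster u [set r | `|u| - e <= r]); first exact: closed_ge.
  have e1 : 0 < e / (`|w| + 1) by rewrite divr_gt0 // ltr_pwDr.
  near=> k; apply: le_trans (perturb k).2; rewrite lerD2l lerN2.
  have : t k < e / (`|w| + 1) by near: k; exact: (near_infty_natSinv_lt (PosNum e1)).
  rewrite ltr_pdivlMr ?ltr_pwDr // => /ltW; apply: le_trans.
  by rewrite ler_pM2l // lerDl.
rewrite (smooth_J_uniq sX u0 Jf (J_of_contraction lg cg u0 gu)).
apply: (g_cluster w [set r | 0 <= r]); first exact: closed_ge.
by apply: filterE => k; exact: (perturb k).1.
Unshelve. all: by end_near.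
Qed.

Lemma smooth_J_birkhoff u w f : smooth X -> u != 0 ->
  (forall s : R, `|u| <= `|u + s *: w|) -> J u f -> f w = 0.
Proof.
move=> sX u0 uw Jf; have [[[lf _] _] _] := Jf.
apply/le_anti; rewrite (smooth_J_birkhoff_ge0 sX u0 uw Jf) andbT.
rewrite -oppr_ge0 -mulN1r -linear_formZ // scaleN1r.
apply: smooth_J_birkhoff_ge0 Jf => // s.
by rewrite scalerN -scaleNr.
Qed.

End SupportFunctionals.

Section Coproximinality.
Variables (R : realType) (X : normedModType R).
Implicit Types (Y S : set X) (f : X -> R) (x y : X).

Lemma sub_vspan S : S `<=` vspan S.
Proof.
move=> y Sy; exists 1%N, (fun _ => 1), (fun _ => y); split => //.
by rewrite big_ord1 scale1r.
Qed.

Lemma vspan_sub_subspace Y S : lin_subspace Y -> S `<=` Y -> vspan S `<=` Y.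
Proof.
move=> [Y0 Ycomb] SY _ [k [c [s [Ss ->]]]].
elim: k c s Ss => [|k IH] c s Ss; first by rewrite big_ord0.
rewrite big_ord_recr /= addrC; apply: Ycomb; first exact: SY.
exact: (IH (fun i => c (widen_ord (leqnSn k) i)) (fun i => s (widen_ord (leqnSn k) i))).
Qed.

Lemma subspaceB Y x y : lin_subspace Y -> Y x -> Y y -> Y (x - y).
Proof. by move=> [_ Ycomb] Yx Yy; rewrite addrC -scaleN1r; exact: Ycomb. Qed.

Lemma sub_fspan (S : set (X -> R)) : S `<=` fspan S.
Proof.
move=> f Sf; exists 1%N, (fun _ => 1), (fun _ => f); split => //.
by apply/funext => x; rewrite big_ord1 mul1r.
Qed.

Lemma J_set_linear Y f : J_set Y f -> linear_form f.
Proof. by move=> [[[]]]. Qed.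

Lemma J_set_contraction Y f : J_set Y f -> contraction f.
Proof. by move=> [fS _]; exact: dual_sphere_contraction. Qed.

Variables (Y : set X) (n : nat) (e : 'I_n -> X).
Hypotheses (sX : smooth X) (Ysub : lin_subspace Y).
Hypotheses (e_free : vlin_indep e) (Ye : vspan Y = vspan (range e)).

Lemma subspace_basisP y : Y y <-> exists c : 'I_n -> R, y = \sum_(i < n) c i *: e i.
Proof.
split=> [Yy|[c ->]]; last first.
  apply: (vspan_sub_subspace Ysub (fun y (Yy : Y y) => Yy)); rewrite Ye.
  by exists n, c, e; split => // i; exists i.
have : vspan (range e) y by rewrite -Ye; exact: sub_vspan.
apply: (vspan_sub_subspace (Y := [set z | exists c, z = \sum_(i < n) c i *: e i])).
  split; first by exists (fun _ => 0); rewrite big1 // => i _; rewrite scale0r.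
  move=> a _ _ [c ->] [d ->]; exists (fun i => a * c i + d i).
  rewrite scaler_sumr -big_split; apply: eq_bigr => i _.
  by rewrite scalerDl scalerA.
move=> _ [i _ <-]; exists (fun j => (j == i)%:R).
rewrite (bigD1 i) //= eqxx scale1r big1 ?addr0 // => j /negbTE ->.
by rewrite scale0r.
Qed.

Lemma J_set_norming y : Y y -> y != 0 -> exists2 f, J_set Y f & f y = `|y|.
Proof.
move=> Yy y0; have [f [fS fy]] := smooth_J_exists sX y0.
by exists f => //; split => //; exists y; split => //; split => //; exact/eqP.
Qed.

Lemma J_set_separating y : Y y -> (forall f, J_set Y f -> f y = 0) -> y = 0.
Proof.
move=> Yy fy0; apply/eqP/negPn/negP => y0.
have [f Jf] := J_set_norming Yy y0; rewrite fy0 // => /esym/eqP.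
by rewrite normr_eq0 (negbTE y0).
Qed.

Lemma best_coapprox_J_set x y0 : Y y0 -> (forall f, J_set Y f -> f x = f y0) ->
  best_coapprox Y x y0.
Proof.
move=> Yy0 fxy0; split => // y Yy.
have [->|d0] := eqVneq (y0 - y) 0; first by rewrite normr0.
have [f Jf <-] := J_set_norming (subspaceB Ysub Yy0 Yy) d0.
have lf := J_set_linear Jf.
rewrite linear_formB // -fxy0 // -linear_formB //.
exact: le_trans (ler_norm _) (J_set_contraction Jf _).
Qed.

Lemma fdim_J_set_coproximinal : fdim_span (J_set Y) n -> coproximinal Y.
Proof.
move=> [b [_ Jb]] x.
have b_lin i : linear_form (b i).
  have : fspan (J_set Y) (b i) by rewrite Jb; apply: sub_fspan; exists i.
  by move=> [k [c [s [Js ->]]]]; apply: linear_form_comb => l; exact: J_set_linear (Js l).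
have b_determines f : J_set Y f -> forall z w, (forall i, b i z = b i w) -> f z = f w.
  move=> Jf z w bzw; have : fspan (range b) f by rewrite -Jb; exact: sub_fspan.
  move=> [k [c [s [bs ->]]]]; apply: eq_bigr => l _.
  by have [i _ <-] := bs l; rewrite bzw.
have [|a ba] := @square_system_solvable _ _ (fun j i => b i (e j)) _ (fun i => b i x).
  move=> a ba; apply: e_free; apply: J_set_separating; first by apply/subspace_basisP; exists a.
  move=> f Jf; rewrite -(linear_form0 (J_set_linear Jf)); apply: b_determines => // i.
  by rewrite linear_form_sum // linear_form0 // ba.
exists (\sum_i a i *: e i); apply: best_coapprox_J_set; first by apply/subspace_basisP; exists a.
by move=> f Jf; apply: b_determines => // i; rewrite linear_form_sum // ba.
Qed.

(* A best coapproximation y0 to x makes x - y0 Birkhoff-James orthogonal to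
   every u in Y, so the support functional at u kills x - y0. *)
Lemma coproximinal_J_set_eval : coproximinal Y ->
  forall x, exists2 y0, Y y0 & forall f, J_set Y f -> f x = f y0.
Proof.
move=> Ycop x; have [y0 [Yy0 y0best]] := Ycop x; exists y0 => // f Jf.
have [_ [u [Yu [/eqP u0 Ju]]]] := Jf.
apply/eqP; rewrite -subr_eq0 -(linear_formB _ _ (J_set_linear Jf)); apply/eqP.
apply: (smooth_J_birkhoff sX u0 _ Ju) => s.
have [->|s0] := eqVneq s 0; first by rewrite scale0r addr0.
have Yy : Y (y0 - s^-1 *: u).
  by apply: subspaceB => //; case: Ysub => Y0 Ycomb; rewrite -[_ *: u]addr0; exact: Ycomb.
have := y0best _ Yy; rewrite opprB addrCA subrr addr0 normrZ normfV.
rewrite -(ler_pM2l (_ : 0 < `|s|)) ?normr_gt0 // mulrA mulfV ?normr_eq0 // mul1r -normrZ.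
move/le_trans; apply.
by rewrite scalerDr scalerBr scalerA mulfV // scale1r scalerBr addrCA.
Qed.

Lemma widen_ord_lift_max k (i : 'I_k) : widen_ord (leqnSn k) i = lift ord_max i.
Proof. by apply: val_inj => /=; rewrite /bump leqNgt ltn_ord. Qed.

(* Given k < n functionals of J_set Y, some nonzero y in Y is annihilated by all
   of them, and the support functional at y is independent of them on e. *)
Lemma J_set_free_on_basis k : (k <= n)%N -> exists2 g : 'I_k -> X -> R,
  forall i, J_set Y (g i) &
  forall a : 'I_k -> R, (forall j, \sum_i a i * g i (e j) = 0) -> forall i, a i = 0.
Proof.
elim: k => [_|k IH kn]; first by exists (fun _ _ => 0) => [[]|a _ []].
have [g Jg g_free] := IH (ltnW kn).
have [c [j0 cj0] gc] := homogeneous_system_nontrivial (fun i j => g i (e j)) kn.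
pose y := \sum_j c j *: e j.
have Yy : Y y by apply/subspace_basisP; exists c.
have y0 : y != 0 by apply/eqP => /e_free y0; rewrite y0 eqxx in cj0.
have [f Jf fy] := J_set_norming Yy y0.
have gy i : g i y = 0.
  rewrite linear_form_sum; last exact: J_set_linear (Jg i).
  by rewrite -[RHS](gc i); apply: eq_bigr => j _; rewrite mulrC.
pose g' i := if unlift ord_max i is Some i' then g i' else f.
have g'_max : g' ord_max = f by rewrite /g' unlift_none.
have g'_widen i : g' (widen_ord (leqnSn k) i) = g i by rewrite /g' widen_ord_lift_max liftK.
exists g' => [i|a ag'e]; first by rewrite /g'; case: unlift.
have lg' i : linear_form (g' i).
  by rewrite /g'; case: unlift => [i'|]; [exact: J_set_linear (Jg i')|exact: J_set_linear Jf].
have ag'y : \sum_i a i * g' i y = 0.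
  have := linear_form_sum c e (linear_form_comb a lg') => /= ->.
  by rewrite big1 // => j _; rewrite ag'e mulr0.
have a_max : a ord_max = 0.
  move: ag'y; rewrite big_ord_recr /= g'_max big1 ?add0r => [|i _].
    by move/eqP; rewrite mulf_eq0 fy normr_eq0 (negbTE y0) orbF => /eqP.
  by rewrite g'_widen gy mulr0.
have a_widen i : a (widen_ord (leqnSn k) i) = 0.
  apply: (g_free (fun i => a (widen_ord (leqnSn k) i))) => j.
  rewrite -[RHS](ag'e j) big_ord_recr /= a_max mul0r addr0.
  by apply: eq_bigr => l _; rewrite g'_widen.
move=> i; case: (unliftP ord_max i) => [i'|] ->; last exact: a_max.
by rewrite -widen_ord_lift_max a_widen.
Qed.

Lemma coproximinal_fdim_J_set : coproximinal Y -> fdim_span (J_set Y) n.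
Proof.
move=> /coproximinal_J_set_eval Yeval.
have [g Jg g_free] := J_set_free_on_basis (leqnn n).
have lg i := J_set_linear (Jg i).
have J_set_comb f : J_set Y f -> exists d : 'I_n -> R, f = (fun x => \sum_i d i * g i x).
  move=> Jf; have [d dg] := square_system_solvable g_free (fun j => f (e j)).
  exists d; apply/funext => x; have [y0 Yy0 fxy0] := Yeval x.
  rewrite (fxy0 f Jf); under eq_bigr => i _ do rewrite (fxy0 _ (Jg i)).
  have [c ->] := (subspace_basisP y0).1 Yy0.
  rewrite linear_form_sum; last exact: J_set_linear Jf.
  under [RHS]eq_bigr => i _ do rewrite linear_form_sum // mulr_sumr.
  rewrite exchange_big /=; apply: eq_bigr => j _.
  by rewrite -dg mulr_sumr; apply: eq_bigr => i _; rewrite mulrCA.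
exists g; split.
  move=> a ag i; apply: g_free => j.
  by have := congr1 (fun h => h (e j)) ag.
apply/seteqP; split=> _ [k [c [s [Js ->]]]]; last first.
  by exists k, c, s; split => // l; have [i _ <-] := Js l.
have /choice [d sd] l := J_set_comb _ (Js l).
exists n, (fun i => \sum_l c l * d l i), g; split => [i|]; first by exists i.
apply/funext => x; under eq_bigr => l _ do rewrite sd mulr_sumr.
rewrite exchange_big /=; apply: eq_bigr => i _.
by rewrite mulr_suml; apply: eq_bigr => l _; rewrite mulrA.
Qed.

End Coproximinality.

Theorem mainTheorem9 (R : realType) (X : completeNormedModType R)
  (Y : set X) (n : nat) :
  smooth X -> lin_subspace Y -> vdim_span Y n ->
  (coproximinal Y <-> fdim_span (J_set Y) n).
Proof.
move=> sX Ysub [e [e_free Ye]]; split.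
  exact: (coproximinal_fdim_J_set sX Ysub e_free Ye).
exact: (fdim_J_set_coproximinal sX Ysub e_free Ye).
Qed.
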